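(* Let $\xi_m>0$, $0\le\mu\le\xi_m$, and for $\Delta\ge0$, $T>0$ define $$f(\mu,\Delta,T)=2T\ln\frac{\cosh(\sqrt{\xi_m^2+\Delta^2}/2T)}{\cosh(\sqrt{\mu^2+\Delta^2}/2T)}+\mu\int_0^{\mu}\tanh\Big(\frac{\sqrt{\xi^2+\Delta^2}}{2T}\Big)\frac{d\xi}{\sqrt{\xi^2+\Delta^2}}$$ (with the integrand at $\Delta=0$ read as $\tanh(\xi/2T)/\xi$). Then for $\Delta>0$, $T>0$ and $\mu\in(0,\xi_m)$: $\partial f/\partial\mu>0$, $\partial f/\partial\Delta<0$, $\partial f/\partial T<0$. Moreover $\lim_{T\to\infty}f(\mu,\Delta,T)=0$ and $\lim_{\Delta\to\infty}f(\mu,\Delta,T)=0$ for fixed $T>0$. *)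

From Stdlib Require Import Reals Lra ClassicalEpsilon.
Open Scope R_scope.

(* Riemann integral of g over [a,b] (0 if g is not Riemann integrable;
   the integrands used below are continuous, hence integrable). *)
Definition Rint (g : R -> R) (a b : R) : R :=
  match excluded_middle_informative (inhabited (Riemann_integrable g a b)) with
  | left h => RiemannInt (epsilon h (fun _ => True))
  | right _ => 0
  end.

(* integrand tanh(sqrt(xi^2+D^2)/(2T)) / sqrt(xi^2+D^2), extended at
   xi = D = 0 by its limit 1/(2T) (the paper's reading tanh(xi/2T)/xi at D=0) *)
Definition integrand (D T xi : R) : R :=
  let E := sqrt (xi ^ 2 + D ^ 2) in
  if Req_EM_T E 0 then / (2 * T) else tanh (E / (2 * T)) / E.

Definition fgap (xim mu D T : R) : R :=
  2 * T * ln (cosh (sqrt (xim ^ 2 + D ^ 2) / (2 * T))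
              / cosh (sqrt (mu ^ 2 + D ^ 2) / (2 * T)))
  + mu * Rint (integrand D T) 0 mu.

From Stdlib Require Import Reals Lra ClassicalEpsilon FunctionalExtensionality.
From Coquelicot Require Import Coquelicot.
Open Scope R_scope.

(** Write [L = ln ∘ cosh], [E(ξ) = sqrt (ξ² + Δ²)] and [k(ξ) = tanh (E/2T) / E] for the
    integrand, so that [f = 2T L(E(ξ_m)/2T) - 2T L(E(μ)/2T) + μ ∫_0^μ k].
    Since [d/dμ (2T L(E(μ)/2T)) = tanh (E/2T) E'(μ) = μ k(μ)], this cancels the boundary
    term of [μ ∫_0^μ k] and [∂f/∂μ = ∫_0^μ k > 0].
    The Δ- and T-derivatives are a boundary part plus [μ ∫_0^μ ∂k], both negative:
    [E ↦ tanh (E/2T) / E] decreases, which gives [∂k/∂Δ < 0] and the Δ boundary part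
    [Δ (k(ξ_m) - k(μ))]; [∂k/∂T = -1 / (2T² cosh² (E/2T))]; and the T boundary part is
    [2 (φ(E(ξ_m)/2T) - φ(E(μ)/2T))] with [φ(y) = L(y) - y tanh y] the intercept of the
    tangent to the convex function [L] at [y], which decreases as [φ'(y) = -y / cosh² y].
    For the limits, [0 <= L a - L b <= min a 1 * (a - b)] when [0 <= b <= a], and
    [|k| <= min (1/2T) (1/Δ)], whence [|f| <= (ξ_m² + Δ²)/T] and [|f| <= 2 ξ_m²/Δ]. *)

Lemma locally_pos x : 0 < x -> locally x (fun y => 0 < y).
Proof.
  intros Hx; exists (mkposreal x Hx); intros y Hy.
  change (Rabs (y - x) < x) in Hy; apply Rabs_lt_between' in Hy; lra.
Qed.

Lemma locally_2d_pos x y : 0 < x -> locally_2d (fun u _ => 0 < u) x y.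
Proof.
  intros Hx; exists (mkposreal x Hx); intros u v Hu _.
  apply Rabs_lt_between' in Hu; simpl in Hu; lra.
Qed.

Lemma ex_derive_continuity_pt (f : R -> R) x :
  @ex_derive R_AbsRing R_NormedModule f x -> continuity_pt f x.
Proof.
  intros; apply continuity_pt_filterlim.
  apply (@ex_derive_continuous R_AbsRing R_NormedModule); auto.
Qed.

Lemma continuity_2d_pt_fst (f : R -> R) x y :
  continuity_pt f x -> continuity_2d_pt (fun u _ => f u) x y.
Proof. intros Hf; exact (continuity_1d_2d_pt_comp f _ x y Hf (continuity_2d_pt_id1 x y)). Qed.

Lemma continuity_2d_pt_snd (f : R -> R) x y :
  continuity_pt f y -> continuity_2d_pt (fun _ v => f v) x y.
Proof. intros Hf; exact (continuity_1d_2d_pt_comp f _ x y Hf (continuity_2d_pt_id2 x y)). Qed.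

Lemma continuity_2d_pt_continuous_snd (f : R -> R -> R) x y :
  continuity_2d_pt f x y -> continuous (f x) y.
Proof.
  intros Hf; apply continuity_pt_filterlim, continuity_pt_locally; intros eps.
  destruct (Hf eps) as [d Hd]; exists d; intros v Hv.
  apply Hd; [rewrite Rminus_diag, Rabs_R0; apply cond_pos|exact Hv].
Qed.

Lemma RInt_lt_0 g a b : a < b -> (forall x, a < x < b -> g x < 0) ->
  (forall x, a <= x <= b -> continuous g x) -> RInt g a b < 0.
Proof.
  intros Hab Hneg Hg.
  assert (Hint : ex_RInt g a b).
  { apply (@ex_RInt_continuous R_CompleteNormedModule); intros x Hx; apply Hg.
    rewrite Rmin_left, Rmax_right in Hx; lra. }
  assert (Hopp : 0 < RInt (fun x => - g x) a b).
  { apply RInt_gt_0; [exact Hab|intros x Hx; specialize (Hneg x Hx); lra|].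
    intros x Hx; apply (@continuous_opp _ R_AbsRing R_NormedModule), Hg, Hx. }
  rewrite (@RInt_opp R_CompleteNormedModule) in Hopp by exact Hint.
  change (0 < - RInt g a b) in Hopp; lra.
Qed.

Lemma derivable_pt_lim_RInt_param_pos (h dh : R -> R -> R) a b p : 0 < p ->
  (forall q x, 0 < q -> derivable_pt_lim (fun u => h u x) q (dh q x)) ->
  (forall x, continuity_2d_pt dh p x) ->
  (forall q, 0 < q -> ex_RInt (h q) a b) ->
  derivable_pt_lim (fun q => RInt (h q) a b) p (RInt (dh p) a b).
Proof.
  intros Hp Hd Hc Hi.
  assert (Hdh : forall q x, 0 < q -> Derive (fun u => h u x) q = dh q x)
    by (intros; apply is_derive_unique, is_derive_Reals, Hd; auto).
  rewrite (RInt_ext _ (fun x => Derive (fun u => h u x) p))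
    by (intros; rewrite Hdh; auto).
  apply is_derive_Reals, (is_derive_RInt_param h).
  - apply (filter_imp (fun q => 0 < q)); [|apply locally_pos, Hp].
    intros q Hq t _; exists (dh q t); apply is_derive_Reals, Hd, Hq.
  - intros t _; apply (continuity_2d_pt_ext_loc dh); [|apply Hc].
    destruct (locally_2d_pos p t Hp) as [d Hpos]; exists d; intros u v Hu Hv.
    symmetry; apply Hdh, (Hpos u v Hu Hv).
  - apply (filter_imp _ _ Hi (locally_pos p Hp)).
Qed.

Lemma Rabs_lt_eventually_of_le_div (g : R -> R) C eps : 0 <= C -> 0 < eps ->
  (forall t, 0 < t -> Rabs (g t) <= C / t) -> exists M, forall t, M < t -> Rabs (g t) < eps.
Proof.
  intros HC Heps Hg; exists (C / eps); intros t Ht.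
  assert (0 <= C / eps) by (apply Rdiv_le_0_compat; lra).
  eapply Rle_lt_trans; [apply Hg; lra|].
  apply Rmult_lt_reg_r with t; [lra|].
  replace (C / t * t) with C by (field; lra).
  apply (Rmult_lt_compat_l eps) in Ht; [|exact Heps].
  replace (eps * (C / eps)) with C in Ht by (field; lra); lra.
Qed.

(** * Hyperbolic functions *)

Lemma cosh_pos x : 0 < cosh x.
Proof. unfold cosh; pose proof (exp_pos x); pose proof (exp_pos (- x)); lra. Qed.

Lemma cosh2_sub_sinh2 x : cosh x ^ 2 - sinh x ^ 2 = 1.
Proof. unfold cosh, sinh; rewrite exp_Ropp; pose proof (exp_pos x); field; lra. Qed.

Lemma cosh_ge_1 x : 1 <= cosh x.
Proof.
  pose proof (cosh2_sub_sinh2 x); pose proof (cosh_pos x); pose proof (pow2_ge_0 (sinh x)).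
  nra.
Qed.

Lemma sinh_lt_cosh x : sinh x < cosh x.
Proof. unfold sinh, cosh; pose proof (exp_pos (- x)); lra. Qed.

Lemma sinh_ge_id x : 0 <= x -> x <= sinh x.
Proof.
  intros Hx; destruct (Req_dec x 0) as [->|Hx0]; [rewrite sinh_0; lra|].
  destruct (MVT_cor2 sinh cosh 0 x) as [c [Hc _]];
    [lra|intros; apply derivable_pt_lim_sinh|].
  rewrite sinh_0 in Hc; pose proof (cosh_ge_1 c); nra.
Qed.

Lemma derivable_pt_lim_tanh x : derivable_pt_lim tanh x (/ cosh x ^ 2).
Proof.
  pose proof (cosh_pos x) as Hc; pose proof (cosh2_sub_sinh2 x) as Hpyth.
  evar_last.
  - apply (derivable_pt_lim_div sinh cosh);
      [apply derivable_pt_lim_sinh|apply derivable_pt_lim_cosh|lra].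
  - replace (cosh x * cosh x - sinh x * sinh x) with 1 by (simpl in Hpyth; lra).
    unfold Rsqr; simpl; field; lra.
Qed.

Lemma tanh_nonneg x : 0 <= x -> 0 <= tanh x.
Proof.
  intros Hx; pose proof (sinh_ge_id x Hx); pose proof (cosh_pos x).
  apply Rdiv_le_0_compat; lra.
Qed.

Lemma tanh_pos x : 0 < x -> 0 < tanh x.
Proof.
  intros Hx; pose proof (sinh_ge_id x (Rlt_le _ _ Hx)); pose proof (cosh_pos x).
  apply Rdiv_lt_0_compat; lra.
Qed.

Lemma tanh_lt_1 x : tanh x < 1.
Proof. apply (Rdiv_lt_1 _ _ (cosh_pos x)), sinh_lt_cosh. Qed.

Lemma tanh_le_id x : 0 <= x -> tanh x <= x.
Proof.
  intros Hx; destruct (Req_dec x 0) as [->|Hx0].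
  { unfold tanh; rewrite sinh_0; lra. }
  destruct (MVT_cor2 tanh (fun c => / cosh c ^ 2) 0 x) as [c [Hc _]];
    [lra|intros; apply derivable_pt_lim_tanh|].
  unfold tanh at 2 in Hc; rewrite sinh_0 in Hc.
  pose proof (cosh_ge_1 c).
  assert (/ cosh c ^ 2 <= 1) by (rewrite <- Rinv_1; apply Rinv_le_contravar; nra).
  nra.
Qed.

Lemma div_cosh2_lt_tanh x : 0 < x -> x / cosh x ^ 2 < tanh x.
Proof.
  intros Hx; pose proof (sinh_ge_id x (Rlt_le _ _ Hx)).
  pose proof (cosh2_sub_sinh2 x); pose proof (cosh_pos x).
  assert (1 < cosh x) by nra.
  assert (tanh x - x / cosh x ^ 2 = (sinh x * cosh x - x) / cosh x ^ 2)
    by (unfold tanh; field; lra).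
  assert (0 < (sinh x * cosh x - x) / cosh x ^ 2) by (apply Rdiv_lt_0_compat; nra).
  lra.
Qed.

Definition lncosh x := ln (cosh x).

Lemma derivable_pt_lim_lncosh x : derivable_pt_lim lncosh x (tanh x).
Proof.
  pose proof (cosh_pos x) as Hc.
  evar_last.
  - apply (derivable_pt_lim_comp cosh ln);
      [apply derivable_pt_lim_cosh|apply derivable_pt_lim_ln, Hc].
  - unfold tanh; field; lra.
Qed.

Lemma lncosh_increment_bounds a b : 0 <= b <= a ->
  0 <= lncosh a - lncosh b <= a * (a - b) /\ lncosh a - lncosh b <= a - b.
Proof.
  intros Hab; destruct (Req_dec a b) as [<-|Hne]; [rewrite Rminus_diag; nra|].
  destruct (MVT_cor2 lncosh tanh b a) as [c [Hc Hbc]];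
    [lra|intros; apply derivable_pt_lim_lncosh|].
  pose proof (tanh_nonneg c ltac:(lra)); pose proof (tanh_le_id c ltac:(lra)).
  pose proof (tanh_lt_1 c).
  rewrite Hc; split; [split|]; nra.
Qed.

Definition lncosh_intercept x := lncosh x - x * tanh x.

Lemma derivable_pt_lim_lncosh_intercept x :
  derivable_pt_lim lncosh_intercept x (- (x / cosh x ^ 2)).
Proof.
  evar_last.
  - apply derivable_pt_lim_minus; [apply derivable_pt_lim_lncosh|].
    apply derivable_pt_lim_mult; [apply derivable_pt_lim_id|apply derivable_pt_lim_tanh].
  - unfold id; field; pose proof (cosh_pos x); lra.
Qed.

Lemma lncosh_intercept_decreasing a b : 0 < a < b ->
  lncosh_intercept b < lncosh_intercept a.
Proof.
  intros Hab.
  destruct (MVT_cor2 lncosh_intercept (fun x => - (x / cosh x ^ 2)) a b)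
    as [c [Hc Hac]]; [lra|intros; apply derivable_pt_lim_lncosh_intercept|].
  assert (0 < c / cosh c ^ 2)
    by (apply Rdiv_lt_0_compat; [lra|pose proof (cosh_pos c); nra]).
  nra.
Qed.

Lemma derivable_pt_lim_div_2T T E : 0 < T ->
  derivable_pt_lim (fun E => E / (2 * T)) E (/ (2 * T)).
Proof. intros HT; apply is_derive_Reals; auto_derive; [auto|ring]. Qed.

Lemma derivable_pt_lim_div_2T_T T E : 0 < T ->
  derivable_pt_lim (fun t => E / (2 * t)) T (- (E / (2 * T ^ 2))).
Proof. intros HT; apply is_derive_Reals; auto_derive; [lra|field; lra]. Qed.

Definition tanh_ratio T E := tanh (E / (2 * T)) / E.

Definition tanh_ratio' T E :=
  (E / (2 * T) / cosh (E / (2 * T)) ^ 2 - tanh (E / (2 * T))) / E ^ 2.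

Lemma derivable_pt_lim_tanh_ratio T E : 0 < T -> E <> 0 ->
  derivable_pt_lim (tanh_ratio T) E (tanh_ratio' T E).
Proof.
  intros HT HE; pose proof (cosh_pos (E / (2 * T))).
  evar_last.
  - apply (derivable_pt_lim_div (fun E => tanh (E / (2 * T))) (fun E => E));
      [|apply derivable_pt_lim_id|exact HE].
    apply (derivable_pt_lim_comp (fun E => E / (2 * T)) tanh);
      [apply derivable_pt_lim_div_2T, HT|apply derivable_pt_lim_tanh].
  - unfold tanh_ratio', Rsqr; field; repeat split; lra.
Qed.

Lemma tanh_ratio'_neg T E : 0 < T -> 0 < E -> tanh_ratio' T E < 0.
Proof.
  intros HT HE.
  pose proof (div_cosh2_lt_tanh (E / (2 * T)) ltac:(apply Rdiv_lt_0_compat; lra)).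
  apply Rdiv_neg_pos; [lra|nra].
Qed.

Lemma tanh_ratio_decreasing T E E' : 0 < T -> 0 < E < E' ->
  tanh_ratio T E' < tanh_ratio T E.
Proof.
  intros HT HE.
  destruct (MVT_cor2 (tanh_ratio T) (tanh_ratio' T) E E') as [c [Hc Hlt]];
    [lra|intros; apply derivable_pt_lim_tanh_ratio; lra|].
  pose proof (tanh_ratio'_neg T c HT ltac:(lra)); nra.
Qed.

(** * The two terms of [fgap] *)

Definition energy D xi := sqrt (xi ^ 2 + D ^ 2).

Lemma energy_sq D xi : energy D xi ^ 2 = xi ^ 2 + D ^ 2.
Proof. apply pow2_sqrt; pose proof (pow2_ge_0 xi); pose proof (pow2_ge_0 D); lra. Qed.

Lemma energy_ge D xi : 0 <= D -> D <= energy D xi.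
Proof.
  intros HD; rewrite <- (sqrt_pow2 D HD) at 1; apply sqrt_le_1_alt.
  pose proof (pow2_ge_0 xi); lra.
Qed.

Lemma energy_pos D xi : 0 < D -> 0 < energy D xi.
Proof. intros HD; pose proof (energy_ge D xi (Rlt_le _ _ HD)); lra. Qed.

Lemma energy_le D xi xi' : 0 <= xi <= xi' -> energy D xi <= energy D xi'.
Proof. intros; apply sqrt_le_1_alt; pose proof (pow2_ge_0 D); nra. Qed.

Lemma energy_lt D xi xi' : 0 <= xi < xi' -> energy D xi < energy D xi'.
Proof.
  intros; pose proof (pow2_ge_0 xi); pose proof (pow2_ge_0 D).
  apply sqrt_lt_1_alt; split; nra.
Qed.

Lemma derivable_pt_lim_energy_xi D xi : 0 < D ->
  derivable_pt_lim (energy D) xi (xi / energy D xi).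
Proof.
  intros HD; pose proof (energy_pos D xi HD); unfold energy in *.
  apply is_derive_Reals; auto_derive; [nra|].
  replace (xi * (xi * 1) + D * (D * 1)) with (xi ^ 2 + D ^ 2) by ring; field; lra.
Qed.

Lemma derivable_pt_lim_energy_D D xi : 0 < D ->
  derivable_pt_lim (fun d => energy d xi) D (D / energy D xi).
Proof.
  intros HD; pose proof (energy_pos D xi HD); unfold energy in *.
  apply is_derive_Reals; auto_derive; [nra|].
  replace (xi * (xi * 1) + D * (D * 1)) with (xi ^ 2 + D ^ 2) by ring; field; lra.
Qed.

Definition lncosh_term T E := 2 * T * lncosh (E / (2 * T)).

Lemma derivable_pt_lim_lncosh_term_E T E : 0 < T ->
  derivable_pt_lim (lncosh_term T) E (tanh (E / (2 * T))).
Proof.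
  intros HT; evar_last.
  - apply (derivable_pt_lim_scal (fun E => lncosh (E / (2 * T)))).
    apply (derivable_pt_lim_comp (fun E => E / (2 * T)) lncosh);
      [apply derivable_pt_lim_div_2T, HT|apply derivable_pt_lim_lncosh].
  - field; lra.
Qed.

Lemma derivable_pt_lim_lncosh_term_T T E : 0 < T ->
  derivable_pt_lim (fun t => lncosh_term t E) T (2 * lncosh_intercept (E / (2 * T))).
Proof.
  intros HT; evar_last.
  - apply (derivable_pt_lim_mult (fun t => 2 * t) (fun t => lncosh (E / (2 * t))));
      [apply derivable_pt_lim_scal, derivable_pt_lim_id|].
    apply (derivable_pt_lim_comp (fun t => E / (2 * t)) lncosh);
      [apply derivable_pt_lim_div_2T_T, HT|apply derivable_pt_lim_lncosh].
  - unfold lncosh_intercept; field; lra.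
Qed.

Definition kernel D T xi := tanh_ratio T (energy D xi).

Lemma integrand_kernel D T : 0 < D -> integrand D T = kernel D T.
Proof.
  intros HD; apply functional_extensionality; intros xi.
  unfold integrand, kernel, tanh_ratio.
  pose proof (energy_pos D xi HD) as HE; unfold energy in HE.
  destruct Req_EM_T; [lra|reflexivity].
Qed.

Lemma kernel_pos D T xi : 0 < D -> 0 < T -> 0 < kernel D T xi.
Proof.
  intros HD HT; pose proof (energy_pos D xi HD) as HE.
  apply Rdiv_lt_0_compat, HE; apply tanh_pos, Rdiv_lt_0_compat; lra.
Qed.

Lemma kernel_continuous D T xi : 0 < D -> 0 < T -> continuous (kernel D T) xi.
Proof.
  intros HD HT; apply (@ex_derive_continuous R_AbsRing R_NormedModule).
  eexists; apply is_derive_Reals.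
  apply (derivable_pt_lim_comp (energy D) (tanh_ratio T));
    [apply derivable_pt_lim_energy_xi, HD|].
  apply derivable_pt_lim_tanh_ratio; [exact HT|apply Rgt_not_eq, energy_pos, HD].
Qed.

Lemma ex_RInt_kernel D T a b : 0 < D -> 0 < T -> ex_RInt (kernel D T) a b.
Proof.
  intros; apply (@ex_RInt_continuous R_CompleteNormedModule).
  intros; apply kernel_continuous; auto.
Qed.

Definition kernel_dD D T xi := tanh_ratio' T (energy D xi) * (D / energy D xi).

Definition kernel_dT D T xi := - / (2 * T ^ 2 * cosh (energy D xi / (2 * T)) ^ 2).

Lemma derivable_pt_lim_kernel_D D T xi : 0 < D -> 0 < T ->
  derivable_pt_lim (fun d => kernel d T xi) D (kernel_dD D T xi).
Proof.
  intros HD HT; apply (derivable_pt_lim_comp (fun d => energy d xi) (tanh_ratio T));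
    [apply derivable_pt_lim_energy_D, HD|].
  apply derivable_pt_lim_tanh_ratio; [exact HT|apply Rgt_not_eq, energy_pos, HD].
Qed.

Lemma derivable_pt_lim_kernel_T D T xi : 0 < D -> 0 < T ->
  derivable_pt_lim (fun t => kernel D t xi) T (kernel_dT D T xi).
Proof.
  intros HD HT; pose proof (energy_pos D xi HD).
  pose proof (cosh_pos (energy D xi / (2 * T))).
  evar_last.
  - apply (derivable_pt_lim_div (fun t => tanh (energy D xi / (2 * t)))
             (fun _ => energy D xi));
      [|apply derivable_pt_lim_const|lra].
    apply (derivable_pt_lim_comp (fun t => energy D xi / (2 * t)) tanh);
      [apply derivable_pt_lim_div_2T_T, HT|apply derivable_pt_lim_tanh].
  - unfold kernel_dT, Rsqr; field; repeat split; lra.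
Qed.

Lemma kernel_dD_neg D T xi : 0 < D -> 0 < T -> kernel_dD D T xi < 0.
Proof.
  intros HD HT; pose proof (energy_pos D xi HD) as HE.
  pose proof (tanh_ratio'_neg T _ HT HE).
  assert (0 < D / energy D xi) by (apply Rdiv_lt_0_compat; lra).
  unfold kernel_dD; nra.
Qed.

Lemma mul_cosh2_pos T y : 0 < T -> 0 < 2 * T ^ 2 * cosh y ^ 2.
Proof.
  intros HT; pose proof (cosh_pos y).
  apply Rmult_lt_0_compat; [apply Rmult_lt_0_compat; [lra|]|]; apply pow_lt; lra.
Qed.

Lemma kernel_dT_neg D T xi : 0 < T -> kernel_dT D T xi < 0.
Proof.
  intros HT; apply Ropp_lt_gt_0_contravar, Rinv_0_lt_compat, mul_cosh2_pos, HT.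
Qed.

Lemma continuity_2d_pt_energy D xi : 0 < D -> continuity_2d_pt energy D xi.
Proof.
  intros HD; unfold energy.
  apply (continuity_1d_2d_pt_comp sqrt (fun d x => x ^ 2 + d ^ 2));
    [apply continuity_pt_sqrt; pose proof (pow2_ge_0 xi); pose proof (pow2_ge_0 D); lra|].
  apply (continuity_2d_pt_plus (fun _ x => x ^ 2) (fun d _ => d ^ 2));
    [apply continuity_2d_pt_snd|apply continuity_2d_pt_fst];
    apply ex_derive_continuity_pt; auto_derive; auto.
Qed.

Lemma continuity_2d_pt_kernel_dD D T xi : 0 < D -> 0 < T ->
  continuity_2d_pt (fun d x => kernel_dD d T x) D xi.
Proof.
  intros HD HT; pose proof (energy_pos D xi HD); unfold kernel_dD.
  apply (continuity_2d_pt_mult (fun d x => tanh_ratio' T (energy d x))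
           (fun d x => d / energy d x)).
  - apply (continuity_1d_2d_pt_comp (tanh_ratio' T) energy);
      [|apply continuity_2d_pt_energy, HD].
    apply ex_derive_continuity_pt; unfold tanh_ratio', tanh, sinh, cosh; auto_derive.
    set (y := energy D xi * / (2 * T)).
    assert (0 < (exp y + exp (- y)) * / 2)
      by (pose proof (exp_pos y); pose proof (exp_pos (- y)); lra).
    repeat split; apply Rgt_not_eq; nra.
  - apply (continuity_2d_pt_mult (fun d _ => d) (fun d x => / energy d x));
      [apply continuity_2d_pt_id1|].
    apply continuity_2d_pt_inv; [apply continuity_2d_pt_energy, HD|lra].
Qed.

Lemma continuity_2d_pt_kernel_dT D T xi : 0 < D -> 0 < T ->
  continuity_2d_pt (fun t x => kernel_dT D t x) T xi.
Proof.
  intros HD HT; unfold kernel_dT.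
  apply continuity_2d_pt_opp, continuity_2d_pt_inv;
    [|apply Rgt_not_eq, mul_cosh2_pos, HT].
  apply (continuity_2d_pt_mult (fun t _ => 2 * t ^ 2)
           (fun t x => cosh (energy D x / (2 * t)) ^ 2));
    [apply continuity_2d_pt_fst, ex_derive_continuity_pt; auto_derive; auto|].
  apply (continuity_1d_2d_pt_comp (fun y => cosh y ^ 2) (fun t x => energy D x * / (2 * t)));
    [apply ex_derive_continuity_pt; unfold cosh; auto_derive; auto|].
  apply (continuity_2d_pt_mult (fun _ x => energy D x) (fun t _ => / (2 * t))).
  - apply continuity_2d_pt_snd, ex_derive_continuity_pt; eexists.
    apply is_derive_Reals, derivable_pt_lim_energy_xi, HD.
  - apply continuity_2d_pt_fst, ex_derive_continuity_pt; auto_derive; lra.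
Qed.

Lemma Rint_RInt g a b : ex_RInt g a b -> Rint g a b = RInt g a b.
Proof.
  intros Hg; unfold Rint; destruct excluded_middle_informative as [Hi|Hn].
  - symmetry; apply RInt_Reals.
  - exfalso; apply Hn; constructor; apply ex_RInt_Reals_0, Hg.
Qed.

Lemma fgap_eq xim mu D T : fgap xim mu D T =
  lncosh_term T (energy D xim) - lncosh_term T (energy D mu) + mu * Rint (integrand D T) 0 mu.
Proof. unfold fgap, lncosh_term, lncosh, energy; rewrite ln_div by apply cosh_pos; ring. Qed.

Lemma fgap_eq_RInt xim mu D T : 0 < D -> 0 < T -> fgap xim mu D T =
  lncosh_term T (energy D xim) - lncosh_term T (energy D mu) + mu * RInt (kernel D T) 0 mu.
Proof.
  intros HD HT; rewrite fgap_eq, (integrand_kernel D T HD), Rint_RInt; [reflexivity|].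
  apply ex_RInt_kernel; auto.
Qed.

(** * Partial derivatives *)

Lemma derivable_pt_lim_lncosh_term_energy_xi T D xi : 0 < D -> 0 < T ->
  derivable_pt_lim (fun x => lncosh_term T (energy D x)) xi (xi * kernel D T xi).
Proof.
  intros HD HT; pose proof (energy_pos D xi HD).
  evar_last.
  - apply (derivable_pt_lim_comp (energy D) (lncosh_term T));
      [apply derivable_pt_lim_energy_xi, HD|apply derivable_pt_lim_lncosh_term_E, HT].
  - unfold kernel, tanh_ratio; field; lra.
Qed.

Lemma derivable_pt_lim_lncosh_term_energy_D T D xi : 0 < D -> 0 < T ->
  derivable_pt_lim (fun d => lncosh_term T (energy d xi)) D (D * kernel D T xi).
Proof.
  intros HD HT; pose proof (energy_pos D xi HD).
  evar_last.
  - apply (derivable_pt_lim_comp (fun d => energy d xi) (lncosh_term T));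
      [apply derivable_pt_lim_energy_D, HD|apply derivable_pt_lim_lncosh_term_E, HT].
  - unfold kernel, tanh_ratio; field; lra.
Qed.

Lemma derivable_pt_lim_fgap_mu xim mu D T : 0 < D -> 0 < T ->
  derivable_pt_lim (fun m => fgap xim m D T) mu (RInt (kernel D T) 0 mu).
Proof.
  intros HD HT.
  assert (Hint : derivable_pt_lim (fun m => RInt (kernel D T) 0 m) mu (kernel D T mu)).
  { apply is_derive_Reals, (is_derive_RInt (kernel D T) _ 0); [|apply kernel_continuous; auto].
    apply filter_forall; intros b.
    apply (@RInt_correct R_CompleteNormedModule), ex_RInt_kernel; auto. }
  replace (fun m => fgap xim m D T) with (fun m =>
    lncosh_term T (energy D xim) - lncosh_term T (energy D m) + m * RInt (kernel D T) 0 m)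
    by (apply functional_extensionality; intros m; symmetry; apply fgap_eq_RInt; auto).
  evar_last.
  - apply derivable_pt_lim_plus;
      [apply derivable_pt_lim_minus;
        [apply derivable_pt_lim_const|apply derivable_pt_lim_lncosh_term_energy_xi; auto]|].
    apply derivable_pt_lim_mult; [apply derivable_pt_lim_id|exact Hint].
  - unfold id; ring.
Qed.

Definition fgap_dD xim mu D T :=
  D * (kernel D T xim - kernel D T mu) + mu * RInt (kernel_dD D T) 0 mu.

Lemma derivable_pt_lim_fgap_D xim mu D T : 0 < D -> 0 < T ->
  derivable_pt_lim (fun d => fgap xim mu d T) D (fgap_dD xim mu D T).
Proof.
  intros HD HT.
  apply is_derive_Reals, (is_derive_ext_loc (fun d =>
    lncosh_term T (energy d xim) - lncosh_term T (energy d mu) + mu * RInt (kernel d T) 0 mu)).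
  { apply (filter_imp (fun d => 0 < d)); [|apply locally_pos, HD].
    intros d Hd; symmetry; apply fgap_eq_RInt; auto. }
  apply is_derive_Reals; evar_last.
  - apply derivable_pt_lim_plus;
      [apply derivable_pt_lim_minus; apply derivable_pt_lim_lncosh_term_energy_D; auto|].
    apply derivable_pt_lim_scal.
    apply (derivable_pt_lim_RInt_param_pos (fun d => kernel d T) (fun d => kernel_dD d T));
      [exact HD| intros; apply derivable_pt_lim_kernel_D; auto
      | intros; apply continuity_2d_pt_kernel_dD; auto| intros; apply ex_RInt_kernel; auto].
  - unfold fgap_dD; ring.
Qed.

Definition fgap_dT xim mu D T :=
  2 * (lncosh_intercept (energy D xim / (2 * T)) - lncosh_intercept (energy D mu / (2 * T)))
  + mu * RInt (kernel_dT D T) 0 mu.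

Lemma derivable_pt_lim_fgap_T xim mu D T : 0 < D -> 0 < T ->
  derivable_pt_lim (fun t => fgap xim mu D t) T (fgap_dT xim mu D T).
Proof.
  intros HD HT.
  apply is_derive_Reals, (is_derive_ext_loc (fun t =>
    lncosh_term t (energy D xim) - lncosh_term t (energy D mu) + mu * RInt (kernel D t) 0 mu)).
  { apply (filter_imp (fun t => 0 < t)); [|apply locally_pos, HT].
    intros t Ht; symmetry; apply fgap_eq_RInt; auto. }
  apply is_derive_Reals; evar_last.
  - apply derivable_pt_lim_plus;
      [apply derivable_pt_lim_minus; apply derivable_pt_lim_lncosh_term_T, HT|].
    apply derivable_pt_lim_scal.
    apply (derivable_pt_lim_RInt_param_pos (fun t => kernel D t) (fun t => kernel_dT D t));
      [exact HT| intros; apply derivable_pt_lim_kernel_T; auto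
      | intros; apply continuity_2d_pt_kernel_dT; auto| intros; apply ex_RInt_kernel; auto].
  - unfold fgap_dT; ring.
Qed.

Lemma RInt_kernel_pos D T mu : 0 < D -> 0 < T -> 0 < mu -> 0 < RInt (kernel D T) 0 mu.
Proof.
  intros; apply RInt_gt_0; [auto|intros; apply kernel_pos; auto|].
  intros; apply kernel_continuous; auto.
Qed.

Lemma fgap_dD_neg xim mu D T : 0 < D -> 0 < T -> 0 < mu < xim -> fgap_dD xim mu D T < 0.
Proof.
  intros HD HT Hmu.
  assert (kernel D T xim < kernel D T mu).
  { apply tanh_ratio_decreasing; [exact HT|].
    split; [apply energy_pos, HD|apply energy_lt; lra]. }
  assert (RInt (kernel_dD D T) 0 mu < 0).
  { apply RInt_lt_0; [lra|intros; apply kernel_dD_neg; auto|intros x _].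
    apply (continuity_2d_pt_continuous_snd (fun d x => kernel_dD d T x)).
    apply continuity_2d_pt_kernel_dD; auto. }
  unfold fgap_dD; nra.
Qed.

Lemma fgap_dT_neg xim mu D T : 0 < D -> 0 < T -> 0 < mu < xim -> fgap_dT xim mu D T < 0.
Proof.
  intros HD HT Hmu.
  assert (lncosh_intercept (energy D xim / (2 * T))
          < lncosh_intercept (energy D mu / (2 * T))).
  { pose proof (energy_pos D mu HD); pose proof (energy_lt D mu xim ltac:(lra)).
    apply lncosh_intercept_decreasing; unfold Rdiv; split;
      [apply Rmult_lt_0_compat|apply Rmult_lt_compat_r]; try apply Rinv_0_lt_compat; lra. }
  assert (RInt (kernel_dT D T) 0 mu < 0).
  { apply RInt_lt_0; [lra|intros; apply kernel_dT_neg; auto|intros x _].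
    apply (continuity_2d_pt_continuous_snd (fun t x => kernel_dT D t x)).
    apply continuity_2d_pt_kernel_dT; auto. }
  unfold fgap_dT; nra.
Qed.

(** * Limits *)

Lemma lncosh_term_sub_bounds T E E' : 0 < T -> 0 <= E <= E' ->
  0 <= lncosh_term T E' - lncosh_term T E <= E' ^ 2 / (2 * T) /\
  lncosh_term T E' - lncosh_term T E <= E' - E.
Proof.
  intros HT HE.
  assert (Hba : 0 <= E / (2 * T) <= E' / (2 * T))
    by (split; unfold Rdiv; [apply Rmult_le_pos|apply Rmult_le_compat_r];
        try (left; apply Rinv_0_lt_compat); lra).
  destruct (lncosh_increment_bounds _ _ Hba) as [[Hlo Hhi] Hlin].
  unfold lncosh_term; rewrite <- Rmult_minus_distr_l.
  replace (E' ^ 2 / (2 * T)) with (2 * T * (E' / (2 * T) * (E' / (2 * T)))) by (field; lra).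
  replace (E' - E) with (2 * T * (E' / (2 * T) - E / (2 * T))) by (field; lra).
  set (a := E' / (2 * T)) in *; set (b := E / (2 * T)) in *.
  split; [split|]; [apply Rmult_le_pos|apply Rmult_le_compat_l|apply Rmult_le_compat_l]; nra.
Qed.

Lemma energy_sub_le D xi xi' : 0 < D -> 0 <= xi <= xi' ->
  energy D xi' - energy D xi <= xi' ^ 2 / D.
Proof.
  intros HD Hxi; pose proof (energy_sq D xi); pose proof (energy_sq D xi').
  pose proof (energy_ge D xi' (Rlt_le _ _ HD)); pose proof (energy_pos D xi HD).
  apply Rmult_le_reg_r with D; [exact HD|].
  unfold Rdiv; rewrite Rmult_assoc, Rinv_l by lra; nra.
Qed.

(* [Rint] is [0] off the integrable functions, so the bound needs no integrability. *)
Lemma Rint_abs_le g b K : 0 <= b -> (forall x, 0 <= x <= b -> Rabs (g x) <= K) ->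
  Rabs (Rint g 0 b) <= K * b.
Proof.
  intros Hb Hg.
  assert (0 <= K) by (pose proof (Hg 0 ltac:(lra)); pose proof (Rabs_pos (g 0)); lra).
  unfold Rint; destruct excluded_middle_informative as [Hi|Hn]; [|rewrite Rabs_R0; nra].
  rewrite <- RInt_Reals; replace (K * b) with ((b - 0) * K) by ring.
  apply abs_RInt_le_const; [exact Hb| |intros; apply Hg; lra].
  destruct Hi as [pr]; apply ex_RInt_Reals_1, pr.
Qed.

Lemma integrand_abs_le_inv_2T D T xi : 0 < T -> Rabs (integrand D T xi) <= / (2 * T).
Proof.
  intros HT; unfold integrand.
  destruct Req_EM_T as [_|HE];
    [rewrite Rabs_right; [lra|left; apply Rinv_0_lt_compat; lra]|].
  pose proof (sqrt_pos (xi ^ 2 + D ^ 2)).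
  set (E := sqrt (xi ^ 2 + D ^ 2)) in *.
  assert (0 < E) by lra.
  assert (Hy : 0 <= E / (2 * T)) by (apply Rdiv_le_0_compat; lra).
  pose proof (tanh_nonneg _ Hy); pose proof (tanh_le_id _ Hy).
  rewrite Rabs_right by (apply Rle_ge, Rdiv_le_0_compat; lra).
  replace (/ (2 * T)) with (E / (2 * T) / E) by (field; lra).
  apply Rmult_le_compat_r; [left; apply Rinv_0_lt_compat|]; lra.
Qed.

Lemma kernel_abs_le_inv_D D T xi : 0 < D -> 0 < T -> Rabs (kernel D T xi) <= / D.
Proof.
  intros HD HT; pose proof (energy_ge D xi (Rlt_le _ _ HD)).
  pose proof (kernel_pos D T xi HD HT).
  assert (Hy : 0 <= energy D xi / (2 * T)) by (apply Rdiv_le_0_compat; lra).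
  pose proof (tanh_lt_1 (energy D xi / (2 * T))).
  rewrite Rabs_right by lra; unfold kernel, tanh_ratio.
  apply Rle_trans with (/ energy D xi); [|apply Rinv_le_contravar; lra].
  rewrite <- (Rmult_1_l (/ energy D xi)); apply Rmult_le_compat_r;
    [left; apply Rinv_0_lt_compat|]; lra.
Qed.

Lemma fgap_abs_le_inv_T xim mu D T : 0 <= mu <= xim -> 0 <= D -> 0 < T ->
  Rabs (fgap xim mu D T) <= (xim ^ 2 + D ^ 2) / T.
Proof.
  intros Hmu HD HT; rewrite fgap_eq.
  destruct (lncosh_term_sub_bounds T (energy D mu) (energy D xim) HT)
    as [[Hlo Hhi] _]; [split; [apply sqrt_pos|apply energy_le, Hmu]|].
  pose proof (Rint_abs_le (integrand D T) mu (/ (2 * T)) ltac:(lra)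
                (fun x _ => integrand_abs_le_inv_2T D T x HT)).
  rewrite energy_sq in Hhi.
  eapply Rle_trans; [apply Rabs_triang|].
  rewrite Rabs_right, Rabs_mult, (Rabs_right mu) by lra.
  apply Rle_trans with ((xim ^ 2 + D ^ 2) / (2 * T) + mu * (/ (2 * T) * mu)); [nra|].
  replace ((xim ^ 2 + D ^ 2) / T)
    with ((xim ^ 2 + D ^ 2) / (2 * T) + (xim ^ 2 + D ^ 2) * / (2 * T)) by (field; lra).
  apply Rplus_le_compat_l.
  replace (mu * (/ (2 * T) * mu)) with (mu ^ 2 * / (2 * T)) by ring.
  apply Rmult_le_compat_r; [left; apply Rinv_0_lt_compat; lra|].
  pose proof (pow2_ge_0 D); nra.
Qed.

Lemma fgap_abs_le_inv_D xim mu D T : 0 <= mu <= xim -> 0 < D -> 0 < T ->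
  Rabs (fgap xim mu D T) <= 2 * xim ^ 2 / D.
Proof.
  intros Hmu HD HT; rewrite fgap_eq_RInt by auto.
  destruct (lncosh_term_sub_bounds T (energy D mu) (energy D xim) HT)
    as [[Hlo _] Hlin]; [split; [apply sqrt_pos|apply energy_le, Hmu]|].
  pose proof (energy_sub_le D mu xim HD Hmu).
  pose proof (Rint_abs_le (kernel D T) mu (/ D) ltac:(lra)
                (fun x _ => kernel_abs_le_inv_D D T x HD HT)) as Hint.
  rewrite Rint_RInt in Hint by (apply ex_RInt_kernel; auto).
  eapply Rle_trans; [apply Rabs_triang|].
  rewrite Rabs_right, Rabs_mult, (Rabs_right mu) by lra.
  replace (2 * xim ^ 2 / D) with (xim ^ 2 / D + xim ^ 2 * / D) by (field; lra).
  apply Rplus_le_compat; [lra|].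
  apply Rle_trans with (mu ^ 2 * / D); [nra|].
  apply Rmult_le_compat_r; [left; apply Rinv_0_lt_compat; lra|nra].
Qed.

Theorem mainTheorem4 (xim : R) (hxim : 0 < xim) :
  (forall mu D T, 0 < D -> 0 < T -> 0 < mu < xim ->
     (exists l, derivable_pt_lim (fun m => fgap xim m D T) mu l /\ 0 < l) /\
     (exists l, derivable_pt_lim (fun d => fgap xim mu d T) D l /\ l < 0) /\
     (exists l, derivable_pt_lim (fun t => fgap xim mu D t) T l /\ l < 0)) /\
  (forall mu D, 0 <= mu <= xim -> 0 <= D ->
     forall eps, 0 < eps -> exists M, forall T, M < T -> Rabs (fgap xim mu D T) < eps) /\
  (forall mu T, 0 <= mu <= xim -> 0 < T ->
     forall eps, 0 < eps -> exists M, forall D, M < D -> Rabs (fgap xim mu D T) < eps).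
Proof.
  split; [|split].
  - intros mu D T HD HT Hmu; split; [|split]; eexists; split.
    + apply derivable_pt_lim_fgap_mu; auto.
    + apply RInt_kernel_pos; lra.
    + apply derivable_pt_lim_fgap_D; auto.
    + apply fgap_dD_neg; auto.
    + apply derivable_pt_lim_fgap_T; auto.
    + apply fgap_dT_neg; auto.
  - intros mu D Hmu HD eps Heps.
    apply (Rabs_lt_eventually_of_le_div (fgap xim mu D) (xim ^ 2 + D ^ 2)); [nra|exact Heps|].
    intros; apply fgap_abs_le_inv_T; auto.
  - intros mu T Hmu HT eps Heps.
    apply (Rabs_lt_eventually_of_le_div (fun d => fgap xim mu d T) (2 * xim ^ 2));
      [nra|exact Heps|].
    intros; apply fgap_abs_le_inv_D; auto.
Qed.
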